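(* Let $R$ be an associative ring with identity and $M$ a left $R$-module which is projective in $\sigma[M]$. Let $SP(M)=\{N\in\Lambda^{fi}(M)\mid N\text{ is semiprime in }M\}\cup\{M\}$, ordered by inclusion. Then $SP(M)$ is a frame. Moreover, $SP(M)\cong\mathcal{O}(LgSpec(M))$ canonically as frames.
   Context: $\Lambda^{fi}(M)$ is the set of fully invariant submodules of $M$. For $N,L\leq M$, $N_ML=\sum\{f(N)\mid f\in\mathrm{Hom}_R(M,L)\}$. A submodule $N\in\Lambda^{fi}(M)$ with $N\neq M$ is semiprime in $M$ if whenever $K\in\Lambda^{fi}(M)$ and $K_MK\subseteq N$, then $K\subseteq N$. $LgSpec(M)$ is the set of submodules $P\neq M$ such that for all $N,L\in\Lambda^{fi}(M)$, $N_ML\subseteq P$ implies $N\subseteq P$ or $L\subseteq P$, with topology whose open sets are $\mathcal{U}(N)=\{P\in LgSpec(M)\mid N\nsubseteq P\}$, $N\in\Lambda^{fi}(M)$; $\mathcal{O}(LgSpec(M))$ is its frame of open sets. A frame is a complete lattice in which finite meets distribute over arbitrary joins. *)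

From HB Require Import structures.
From mathcomp Require Import all_boot all_algebra.
Set Implicit Arguments. Unset Strict Implicit. Unset Printing Implicit Defensive.
Import GRing.Theory.
Local Open Scope ring_scope.

Section Order.
Variable T : Type.

Definition incl (A B : T -> Prop) : Prop := forall x, A x -> B x.

Variable (S : T -> Prop) (le : T -> T -> Prop).

Definition is_lub (X : T -> Prop) (u : T) : Prop :=
  S u /\ (forall x, X x -> le x u) /\
  (forall v, S v -> (forall x, X x -> le x v) -> le u v).

Definition is_glb (X : T -> Prop) (u : T) : Prop :=
  S u /\ (forall x, X x -> le u x) /\
  (forall v, S v -> (forall x, X x -> le v x) -> le v u).

Definition pairset (a b : T) : T -> Prop := fun z => z = a \/ z = b.

(* (S, le) is a frame: a complete lattice (every subfamily has a join and a
   meet in S) in which binary meets distribute over arbitrary joins: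
   a /\ (\/ X) = \/ { a /\ x | x in X }. *)
Definition is_frame : Prop :=
  (forall X, (forall x, X x -> S x) -> exists u, is_lub X u) /\
  (forall X, (forall x, X x -> S x) -> exists u, is_glb X u) /\
  (forall a X j m, S a -> (forall x, X x -> S x) ->
     is_lub X j -> is_glb (pairset a j) m ->
     is_lub (fun y => exists x, X x /\ is_glb (pairset a x) y) m).
End Order.

Section Modules.
Variable R : pzRingType.

Definition M_generated (M K : lmodType R) : Prop :=
  forall k : K, exists n (f : 'I_n -> {linear M -> K}) (m : 'I_n -> M),
    k = \sum_(i < n) f i (m i).

Definition in_sigma (M N : lmodType R) : Prop :=
  exists (K : lmodType R) (g : {linear N -> K}), M_generated M K /\ injective g.

Definition proj_in_sigma (M : lmodType R) : Prop :=
  forall (A B : lmodType R) (g : {linear A -> B}) (f : {linear M -> B}),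
    in_sigma M A -> in_sigma M B -> (forall b, exists a, g a = b) ->
    exists h : {linear M -> A}, forall x, g (h x) = f x.

Variable M : lmodType R.

Definition is_submodule (N : M -> Prop) : Prop :=
  N 0 /\ (forall x y, N x -> N y -> N (x + y)) /\
  (forall (r : R) x, N x -> N (r *: x)).

Definition fully_invariant (N : M -> Prop) : Prop :=
  is_submodule N /\ forall (f : {linear M -> M}) x, N x -> N (f x).

(* N_M L = sum { f(N) | f in Hom_R(M, L) } (finite sums of such images) *)
Definition prodM (N L : M -> Prop) : M -> Prop := fun x =>
  exists n (f : 'I_n -> {linear M -> M}) (m : 'I_n -> M),
    (forall i y, L (f i y)) /\ (forall i, N (m i)) /\
    x = \sum_(i < n) f i (m i).

Definition semiprime (N : M -> Prop) : Prop :=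
  fully_invariant N /\ ~ (forall x, N x) /\
  (forall K, fully_invariant K -> incl (prodM K K) N -> incl K N).

Definition SP (N : M -> Prop) : Prop := semiprime N \/ (forall x, N x).

Definition LgSpec (P : M -> Prop) : Prop :=
  is_submodule P /\ ~ (forall x, P x) /\
  (forall N L, fully_invariant N -> fully_invariant L ->
     incl (prodM N L) P -> incl N P \/ incl L P).

Definition Uopen (N : M -> Prop) : (M -> Prop) -> Prop :=
  fun P => LgSpec P /\ ~ incl N P.

Definition opens (O : (M -> Prop) -> Prop) : Prop :=
  exists N, fully_invariant N /\ O = Uopen N.
End Modules.

(* Projectivity of [M] in sigma[M] lets every endomorphism of [M] with image
   in a sum [C + P] split into a part in [C] and a part in [P]; hence
   [(A + P)_M (C + P)] lies in [P] as soon as [A_M C] does and [P] is fully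
   invariant.  With this, a Zorn argument over an m-system shows that every
   semiprime submodule is the intersection of the fully invariant prime
   submodules containing it.  Since [SP(M)] is closed under arbitrary
   intersections it is a complete lattice, and separating points by such
   primes gives both the frame distributivity and the fact that [N |-> U(N)]
   is an order isomorphism onto the open sets of [LgSpec(M)]. *)

From HB Require Import structures.
From mathcomp Require Import all_boot all_algebra.
From mathcomp Require Import boolp.
From mathcomp Require classical_sets.
Set Implicit Arguments. Unset Strict Implicit. Unset Printing Implicit Defensive.
Import GRing.Theory.
Local Open Scope ring_scope.

Lemma Zorn_incl (T : Type) (P : (T -> Prop) -> Prop) :
  (forall F : (T -> Prop) -> Prop, (forall A, F A -> P A) ->
     (forall A B, F A -> F B -> incl A B \/ incl B A) ->
     P (fun x => exists2 A, F A & A x)) ->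
  exists2 A, P A & forall B, P B -> incl A B -> incl B A.
Proof.
move=> chainP; have [A [PA Amax]] := classical_sets.Zorn_bigcup chainP.
by exists A => // B PB AB; apply: contrapT => BA; apply: (Amax B).
Qed.

Definition bigcap (T : Type) (X : (T -> Prop) -> Prop) : T -> Prop :=
  fun z => forall A, X A -> A z.

Section SubmoduleType.
Variables (R : pzRingType) (V : lmodType R) (P : V -> Prop).
Hypothesis subP : is_submodule P.

Definition submod_pred : {pred V} := fun x => `[< P x >].

Lemma submod_pred_closed : subsemimod_closed submod_pred.
Proof.
case: subP => P0 [PD PZ]; split; first split.
- exact/asboolP.
- by move=> x y /asboolP Px /asboolP Py; apply/asboolP; apply: PD.
- by move=> a x /asboolP Px; apply/asboolP; apply: PZ.
Qed.

(* The type is indexed by the proof [h] because its module structure depends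
   on it. *)
Record submod (h : is_submodule P) :=
  Submod { submod_val : V; submod_valP : submod_pred submod_val }.
HB.instance Definition _ := [isSub for @submod_val subP].
HB.instance Definition _ := [Choice of submod subP by <:].
HB.instance Definition _ :=
  GRing.SubChoice_isSubLmodule.Build R V submod_pred (submod subP) submod_pred_closed.

Lemma submodP (u : submod subP) : P (val u).
Proof. exact/asboolP/(submod_valP u). Qed.
End SubmoduleType.
Arguments submod {R V P} h.
Arguments Submod {R V P h submod_val} submod_valP.

Section LinearOf.
Variables (R : pzRingType) (U V : lmodType R) (F : U -> V) (linF : linear F).
Definition linear_of_fun := F.
HB.instance Definition _ := GRing.isLinear.Build R U V *:%R linear_of_fun linF.
Definition linear_of : {linear U -> V} := linear_of_fun.
End LinearOf.
Arguments linear_of {R U V} F linF.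

Section Modules.
Variable R : pzRingType.

Lemma M_generated_self (M : lmodType R) : M_generated M M.
Proof.
move=> k; exists 1%N, (fun _ => idfun), (fun _ => k).
by rewrite big_ord1.
Qed.

Lemma M_generated_pair (M : lmodType R) : M_generated M (M * M)%type.
Proof.
have linl : linear (fun x : M => (x, 0 : M)).
  by move=> a u v; apply: injective_projections; rewrite /= ?scaler0 ?addr0.
have linr : linear (fun x : M => (0 : M, x)).
  by move=> a u v; apply: injective_projections; rewrite /= ?scaler0 ?addr0.
move=> [k1 k2]; exists 2%N.
exists (fun i : 'I_2 => if val i == 0%N then linear_of _ linl else linear_of _ linr).
exists (fun i : 'I_2 => if val i == 0%N then k1 else k2).
rewrite !big_ord_recl big_ord0 /= addr0.
by apply: injective_projections; rewrite /= ?addr0 ?add0r.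
Qed.

Variable M : lmodType R.
Implicit Types (A B C D N L P K : M -> Prop).

Definition subsum A B : M -> Prop := fun z => exists a b, [/\ A a, B b & z = a + b].

Lemma subsum_submodule A B :
  is_submodule A -> is_submodule B -> is_submodule (subsum A B).
Proof.
move=> [A0 [AD AZ]] [B0 [BD BZ]]; split; first by exists 0, 0; rewrite addr0.
split.
  move=> x y [a [b [Aa Bb ->]]] [a' [b' [Aa' Bb' ->]]].
  by exists (a + a'), (b + b'); rewrite addrACA; split; [exact: AD|exact: BD|].
move=> r x [a [b [Aa Bb ->]]]; exists (r *: a), (r *: b).
by rewrite scalerDr; split; [exact: AZ|exact: BZ|].
Qed.

(* Projectivity applied to the epimorphism [C x D -> C + D]. *)
Lemma proj_hom_subsum_split C D (f : {linear M -> M}) :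
  proj_in_sigma M -> is_submodule C -> is_submodule D ->
  (forall y, subsum C D (f y)) ->
  exists g h : {linear M -> M},
    [/\ forall y, C (g y), forall y, D (h y) & forall y, f y = g y + h y].
Proof.
move=> proj subC subD fCD.
have subCD : @is_submodule R (M * M)%type (fun p => C p.1 /\ D p.2).
  case: subC => C0 [CD CZ]; case: subD => D0 [DD DZ]; split=> //.
  split; first by move=> x y [? ?] [? ?]; split; [exact: CD|exact: DD].
  by move=> r x [? ?]; split; [exact: CZ|exact: DZ].
have subS := subsum_submodule subC subD.
have addP (p : submod subCD) : submod_pred (subsum C D) ((val p).1 + (val p).2).
  by apply/asboolP; have [? ?] := submodP p; exists (val p).1, (val p).2.
have linadd : linear (fun p => Submod (addP p) : submod subS).
  by move=> r u v; apply: val_inj; rewrite /= scalerDr addrACA.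
have fP y : submod_pred (subsum C D) (f y) by apply/asboolP.
have linf : linear (fun y => Submod (fP y) : submod subS).
  by move=> r u v; apply: val_inj; rewrite /= linearP.
have [||| h Hh] := proj _ _ (linear_of _ linadd) (linear_of _ linf).
- exists (M * M)%type, (val : {linear submod subCD -> (M * M)%type}).
  by split; [exact: M_generated_pair|exact: val_inj].
- exists M, (val : {linear submod subS -> M}).
  by split; [exact: M_generated_self|exact: val_inj].
- move=> q; have [c [d [Cc Dd qcd]]] := submodP q.
  have cdP : submod_pred (fun p : M * M => C p.1 /\ D p.2) (c, d) by apply/asboolP.
  by exists (Submod cdP); apply: val_inj; rewrite /= qcd.
have lin1 : linear (fun y => (val (h y)).1) by move=> r u v; rewrite linearP.
have lin2 : linear (fun y => (val (h y)).2) by move=> r u v; rewrite linearP.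
exists (linear_of _ lin1), (linear_of _ lin2); split.
- by move=> y; case: (submodP (h y)).
- by move=> y; case: (submodP (h y)).
- by move=> y; have := congr1 val (Hh y).
Qed.

End Modules.

Section FullyInvariant.
Variables (R : pzRingType) (M : lmodType R).
Implicit Types (A B C N L P K : M -> Prop).

Lemma submodule_sum P n (F : 'I_n -> M) :
  is_submodule P -> (forall i, P (F i)) -> P (\sum_(i < n) F i).
Proof. by move=> [P0 [PD _]] PF; apply: (big_ind P) => // i _; exact: PF. Qed.

Lemma fully_invariant_subsum A B :
  fully_invariant A -> fully_invariant B -> fully_invariant (subsum A B).
Proof.
move=> [subA Af] [subB Bf]; split; first exact: subsum_submodule.
move=> f x [a [b [Aa Bb ->]]]; exists (f a), (f b).
by rewrite raddfD; split; [exact: Af|exact: Bf|].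
Qed.

Lemma prodM_subr N L : is_submodule L -> incl (prodM N L) L.
Proof.
by move=> subL x [n [f [m [fL [_ ->]]]]]; apply: submodule_sum => // i; exact: fL.
Qed.

Lemma prodM_subl A N L : fully_invariant A -> incl N A -> incl (prodM N L) A.
Proof.
move=> [subA Af] NA x [n [f [m [_ [Nm ->]]]]]; apply: submodule_sum => // i.
by apply: Af; apply: NA.
Qed.

Lemma prodM_mono N N' L L' :
  incl N N' -> incl L L' -> incl (prodM N L) (prodM N' L').
Proof.
move=> NN' LL' x [n [f [m [fL [Nm ->]]]]]; exists n, f, m.
by split=> [i y|]; [apply: LL'|split=> // i; apply: NN'].
Qed.

Lemma fully_invariant_prodM N L : (forall r x, N x -> N (r *: x)) ->
  fully_invariant L -> fully_invariant (prodM N L).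
Proof.
move=> NZ [subL Lf]; split; first split.
- exists 0%N, (fun _ => idfun), (fun _ => 0).
  by split=> [[]//|]; split=> [[]//|]; rewrite big_ord0.
- split.
  + move=> x y [n [f [m [fL [Nm ->]]]]] [n' [f' [m' [fL' [Nm' ->]]]]].
    exists (n + n')%N, (fun i => match split i with inl j => f j | inr j => f' j end).
    exists (fun i => match split i with inl j => m j | inr j => m' j end).
    split=> [i z|]; first by case: (split i).
    split=> [i|]; first by case: (split i).
    rewrite big_split_ord /=; congr (_ + _); apply: eq_bigr => i _.
      by rewrite -[lshift _ _]/(unsplit (inl _)) unsplitK.
    by rewrite -[rshift _ _]/(unsplit (inr _)) unsplitK.
  + move=> r x [n [f [m [fL [Nm ->]]]]]; exists n, f, (fun i => r *: m i).
    split=> //; split=> [i|]; first exact: NZ.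
    by rewrite scaler_sumr; apply: eq_bigr => i _; rewrite linearZ.
- move=> g x [n [f [m [fL [Nm ->]]]]]; exists n, (fun i => (g \o f i)%FUN), m.
  by split=> [i y|]; [exact: Lf (fL i y)|split=> //; rewrite raddf_sum].
Qed.

(* Split each endomorphism with image in [C + P] by projectivity: its
   [C]-part maps [A] into [A_M C], and everything else lands in [P]. *)
Lemma prodM_subsum_sub A C P : proj_in_sigma M -> is_submodule C ->
  fully_invariant P -> incl (prodM A C) P ->
  incl (prodM (subsum A P) (subsum C P)) P.
Proof.
move=> proj subC [subP Pf] ACP x [n [f [m [fCP [mAP ->]]]]].
apply: submodule_sum => // i.
have [g [h [gC hP ->]]] := proj_hom_subsum_split proj subC subP (fCP i).
have [a [b [Aa Pb ->]]] := mAP i.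
case: (subP) => _ [PD _]; rewrite raddfD; apply: (PD); last exact: hP.
apply: (PD); last exact: Pf.
apply: ACP; exists 1%N, (fun _ => g), (fun _ => a).
by split=> [_ y|]; [exact: gC|rewrite big_ord1].
Qed.

Definition fi_core P : M -> Prop := fun x => forall f : {linear M -> M}, P (f x).

Lemma fully_invariant_fi_core P : is_submodule P -> fully_invariant (fi_core P).
Proof.
move=> [P0 [PD PZ]]; split; first split.
- by move=> f; rewrite raddf0.
- split=> [x y Px Py f|r x Px f]; last by rewrite linearZ; apply: PZ; exact: Px.
  by rewrite raddfD; apply: PD; [exact: Px|exact: Py].
- by move=> g x Px f; exact: (Px (f \o g)%FUN).
Qed.

Lemma fi_core_sub P : incl (fi_core P) P.
Proof. by move=> x Px; exact: (Px idfun). Qed.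

Lemma fi_core_max N P : fully_invariant N -> incl N P -> incl N (fi_core P).
Proof. by move=> [_ Nf] NP x Nx f; apply/NP/Nf. Qed.

Lemma LgSpec_fi_core P : LgSpec P -> LgSpec (fi_core P).
Proof.
move=> [subP [Pfull Pprime]]; split; first by case: (fully_invariant_fi_core subP).
split=> [coreT|N L Nfi Lfi NLP].
  by apply: Pfull => x; exact: fi_core_sub (coreT x).
have NLP' : incl (prodM N L) P by move=> x /NLP/fi_core_sub.
by case: (Pprime N L Nfi Lfi NLP') => [NP|LP]; [left|right]; apply: fi_core_max.
Qed.

(* [(R y)_M M], the fully invariant submodule generated by [y]. *)
Definition fi_span (y : M) : M -> Prop :=
  prodM (fun z => exists r, z = r *: y) (fun _ => True).

Lemma fully_invariant_fi_span y : fully_invariant (fi_span y).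
Proof.
apply: fully_invariant_prodM; first by move=> r _ [s ->]; exists (r * s); rewrite scalerA.
by split=> //; split.
Qed.

Lemma fi_span_mem y : fi_span y y.
Proof.
exists 1%N, (fun _ => idfun), (fun _ => y).
by split=> //; split=> [_|]; [exists 1; rewrite scale1r|rewrite big_ord1].
Qed.

Lemma fi_span_min A y : fully_invariant A -> A y -> incl (fi_span y) A.
Proof.
move=> Afi Ay; apply: prodM_subl => // _ [r ->].
by case: Afi => [[_ [_ AZ]] _]; apply: AZ.
Qed.

Lemma LgSpec_semiprime P : LgSpec P -> fully_invariant P -> semiprime P.
Proof.
move=> [_ [Pfull Pprime]] Pfi; split=> //; split=> // K Kfi KKP.
by case: (Pprime K K Kfi Kfi KKP).
Qed.

Lemma SP_fully_invariant N : SP N -> fully_invariant N.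
Proof. by case=> [[]//|NT]; split=> //; split=> //; split. Qed.

Lemma SP_bigcap (X : (M -> Prop) -> Prop) : (forall A, X A -> SP A) ->
  SP (bigcap X).
Proof.
move=> XSP; have [capT|capNT] := pselect (forall z, bigcap X z); first by right.
have Xfi A (XA : X A) := SP_fully_invariant (XSP A XA).
left; split; first split; first split.
- by move=> A XA; case: (Xfi A XA) => [[]].
- split=> [u v Cu Cv A XA|r u Cu A XA]; case: (Xfi A XA) => [[_ [AD AZ]] _].
    by apply: AD; [exact: Cu|exact: Cv].
  by apply: AZ; exact: Cu.
- by move=> f u Cu A XA; case: (Xfi A XA) => [_ Af]; exact: Af (Cu A XA).
split=> // K Kfi KKcap z Kz A XA.
case: (XSP A XA) => [[_ [_ Asemi]]|AT]; last exact: AT.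
exact: (Asemi K Kfi (fun y KKy => KKcap y KKy A XA)).
Qed.

End FullyInvariant.

Section Separation.
Variables (R : pzRingType) (M : lmodType R).
Implicit Types (A B N L P : M -> Prop) (xs : nat -> M).

(* An m-system outside [N] starting at [x]. *)
Lemma semiprime_msystem N x : semiprime N -> ~ N x ->
  exists xs, [/\ xs 0%N = x, forall i, ~ N (xs i) &
    forall i, prodM (fi_span (xs i)) (fi_span (xs i)) (xs i.+1)].
Proof.
move=> [_ [_ Nsemi]] Nx.
have [step stepP] : {step : M -> M & forall y, ~ N y ->
    prodM (fi_span y) (fi_span y) (step y) /\ ~ N (step y)}.
  apply: (@choice _ _ (fun y z =>
    ~ N y -> prodM (fi_span y) (fi_span y) z /\ ~ N z)) => y.
  have [Ny|Ny] := pselect (N y); first by exists 0.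
  apply: contra_notP Ny => noz.
  apply: (Nsemi _ (fully_invariant_fi_span y) _ y (fi_span_mem y)) => z yyz.
  by apply: contrapT => Nz; apply: noz; exists z.
pose xs i := iter i step x.
have xsN i : ~ N (xs i) by elim: i => [|i IH] //=; case: (stepP _ IH).
by exists xs; split=> // i; case: (stepP _ (xsN i)).
Qed.

Lemma msystem_fi_span_decr xs :
  (forall i, prodM (fi_span (xs i)) (fi_span (xs i)) (xs i.+1)) ->
  forall i k, (i <= k)%N -> incl (fi_span (xs k)) (fi_span (xs i)).
Proof.
move=> xsS i k /subnKC <-; elim: (k - i)%N => [|d IH]; first by rewrite addn0.
move=> z; rewrite addnS => zS; apply: IH; move: z zS.
apply: fi_span_min; first exact: fully_invariant_fi_span.
apply: prodM_subr (xsS _); exact: (fully_invariant_fi_span _).1.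
Qed.

Definition avoiding N xs A :=
  [/\ fully_invariant A, incl N A & forall i, ~ A (xs i)].

(* Zorn is applied to the sets that are avoiding or empty, so that the
   empty chain has an upper bound. *)
Lemma maximal_avoiding N xs : avoiding N xs N ->
  exists2 P, avoiding N xs P & forall B, avoiding N xs B -> incl P B -> incl B P.
Proof.
move=> avN; pose Q A := (exists z, A z) -> avoiding N xs A.
have [P QP Pmax] : exists2 P, Q P & forall B, Q B -> incl P B -> incl B P.
  apply: Zorn_incl => F FQ Ftot [z [A0 FA0 A0z]].
  have avF A y : F A -> A y -> avoiding N xs A by move=> FA Ay; apply: FQ FA _; exists y.
  have [[[A00 _] _] NA0 _] := avF _ _ FA0 A0z.
  split; first split; first split.
  - by exists A0.
  - split=> [u v [A1 FA1 A1u] [A2 FA2 A2v]|r u [A1 FA1 A1u]].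
      have [A12|A21] := Ftot _ _ FA1 FA2.
        have [[[_ [AD _]] _] _ _] := avF _ _ FA2 A2v.
        by exists A2 => //; apply: AD => //; exact: A12.
      have [[[_ [AD _]] _] _ _] := avF _ _ FA1 A1u.
      by exists A1 => //; apply: AD => //; exact: A21.
    have [[[_ [_ AZ]] _] _ _] := avF _ _ FA1 A1u.
    by exists A1 => //; exact: AZ.
  - move=> f u [A1 FA1 A1u]; have [[_ Af] _ _] := avF _ _ FA1 A1u.
    by exists A1 => //; exact: Af.
  - by move=> y Ny; exists A0 => //; exact: NA0.
  - by move=> i [A1 FA1 A1x]; case: (avF _ _ FA1 A1x) => _ _ /(_ i).
have avP : avoiding N xs P.
  apply: QP; apply: contrapT => Pempty.
  have PN : incl P N by move=> z Pz; case: Pempty; exists z.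
  have NP := Pmax N (fun=> avN) PN.
  by apply: Pempty; exists 0; apply: NP; case: avN => [[[]]].
by exists P => // B avB; exact: Pmax B (fun=> avB).
Qed.

Lemma maximal_avoiding_LgSpec N xs P : proj_in_sigma M ->
  (forall i, prodM (fi_span (xs i)) (fi_span (xs i)) (xs i.+1)) ->
  avoiding N xs P -> (forall B, avoiding N xs B -> incl P B -> incl B P) ->
  LgSpec P.
Proof.
move=> proj xsS [Pfi NP Pxs] Pmax; split; first exact: Pfi.1.
split=> [PT|A C Afi Cfi ACP]; first exact: Pxs 0%N (PT _).
have hit B : fully_invariant B -> ~ incl B P -> exists i, subsum B P (xs i).
  move=> Bfi BP; apply: contrapT => nohit; apply: BP => y By.
  have B0 : B 0 by case: Bfi => [[]].
  have P0 : P 0 by case: Pfi => [[]].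
  have PBP : incl P (subsum B P) by move=> z Pz; exists 0, z; rewrite add0r.
  have BPav : avoiding N xs (subsum B P).
    split=> [|z /NP/PBP //|i BPi]; first exact: fully_invariant_subsum.
    by apply: nohit; exists i.
  by apply: Pmax BPav PBP _ _; exists y, 0; rewrite addr0.
apply: contrapT => /not_orP[AP CP].
have [i APi] := hit A Afi AP; have [j CPj] := hit C Cfi CP.
have span_sub B l : fully_invariant B -> subsum B P (xs l) -> (l <= maxn i j)%N ->
    incl (fi_span (xs (maxn i j))) (subsum B P).
  move=> Bfi BPl lk z /(msystem_fi_span_decr xsS lk).
  by apply: fi_span_min => //; exact: fully_invariant_subsum.
apply: (Pxs (maxn i j).+1); apply: (prodM_subsum_sub proj Cfi.1 Pfi ACP).
apply: prodM_mono (xsS _).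
  exact: span_sub Afi APi (leq_maxl _ _).
exact: span_sub Cfi CPj (leq_maxr _ _).
Qed.

Lemma SP_separation N x : proj_in_sigma M -> SP N -> ~ N x ->
  exists P, [/\ LgSpec P, fully_invariant P, incl N P & ~ P x].
Proof.
move=> proj [Nsemi|NT] Nx; last by case: (Nx (NT x)).
have [xs [xs0 xsN xsS]] := semiprime_msystem Nsemi Nx.
have [|P [Pfi NP Pxs] Pmax] := @maximal_avoiding N xs.
  by split=> //; case: Nsemi.
exists P; split=> //; last by rewrite -xs0.
exact: maximal_avoiding_LgSpec proj xsS _ Pmax.
Qed.

End Separation.

Section Frame.
Variables (R : pzRingType) (M : lmodType R).
Hypothesis proj : proj_in_sigma M.
Implicit Types (X : (M -> Prop) -> Prop) (a j m v N P : M -> Prop).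

Lemma SP_glb X : (forall A, X A -> SP A) -> is_glb (@SP R M) (@incl M) X (bigcap X).
Proof.
move=> XSP; split; first exact: SP_bigcap.
by split=> [A XA z|v _ vX z vz A XA]; [apply|exact: vX A XA z vz].
Qed.

Lemma SP_lub X : is_lub (@SP R M) (@incl M) X
  (bigcap (fun v => SP v /\ forall A, X A -> incl A v)).
Proof.
split; first by apply: SP_bigcap => v [].
by split=> [A XA z Az v [_ Xv]|v SPv Xv z]; [exact: Xv A XA z Az|apply; split].
Qed.

(* A fully invariant prime [P] above the meet [a /\ x] contains [a_M x], hence
   contains [a] or [x]. *)
Lemma SP_meet_join_distr a X jX m : SP a -> (forall x, X x -> SP x) ->
  is_lub (@SP R M) (@incl M) X jX -> is_glb (@SP R M) (@incl M) (pairset a jX) m ->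
  is_lub (@SP R M) (@incl M)
    (fun y => exists x, X x /\ is_glb (@SP R M) (@incl M) (pairset a x) y) m.
Proof.
move=> SPa XSP [_ [XjX jXmin]] [SPm [mlow mmax]].
have ma := mlow a (or_introl erefl); have mjX := mlow jX (or_intror erefl).
split=> //; split=> [y [x [Xx [SPy [ylow _]]]]|v SPv vup z mz].
  apply: mmax => // _ [->|->]; first exact: ylow a (or_introl erefl).
  by move=> z /(ylow x (or_intror erefl)) /(XjX x Xx).
apply: contrapT => vz; have [P [PL Pfi vP Pz]] := SP_separation proj SPv vz.
have [aP|aNP] := pselect (incl a P); first exact/Pz/aP/ma.
have XP x : X x -> incl x P.
  move=> Xx; have [_ [_ Pprime]] := PL.
  have aSP := SP_fully_invariant SPa; have xSP := SP_fully_invariant (XSP x Xx).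
  case: (Pprime a x aSP xSP) => // w axw; apply/vP/(vup (bigcap (pairset a x))).
    exists x; split=> //; apply: SP_glb => A [->|->] //; exact: XSP.
  move=> A [->|->]; first exact: prodM_subl aSP (fun u au => au) w axw.
  exact: prodM_subr xSP.1 w axw.
exact/Pz/(jXmin P (or_introl (LgSpec_semiprime PL Pfi)) XP)/mjX.
Qed.

Lemma SP_frame : is_frame (@SP R M) (@incl M).
Proof.
split=> [X _|]; first by eexists; exact: SP_lub.
split=> [X XSP|]; first by eexists; exact: SP_glb.
exact: SP_meet_join_distr.
Qed.

(* Every basic open set is [U(N)] for the semiprime intersection of the
   fully invariant primes containing [N0]. *)
Lemma Uopen_SP N0 : fully_invariant N0 ->
  exists N, SP N /\ Uopen N = Uopen N0.
Proof.
move=> N0fi; pose X P := [/\ LgSpec P, fully_invariant P & incl N0 P].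
exists (bigcap X); split.
  by apply: SP_bigcap => P [PL Pfi _]; left; exact: LgSpec_semiprime.
have N0X : incl N0 (bigcap X) by move=> z N0z P [_ _ N0P]; exact: N0P.
apply: funext => P; apply: propext; split=> -[PL XNP]; split=> // N0P; apply: XNP.
  move=> z Xz; apply: fi_core_sub; apply: Xz; split.
  - exact: LgSpec_fi_core.
  - by apply: fully_invariant_fi_core; case: PL.
  - exact: fi_core_max.
by move=> z N0z; exact: N0P z (N0X z N0z).
Qed.

Lemma SP_incl_Uopen N1 N2 : SP N1 -> SP N2 ->
  incl N1 N2 <-> incl (Uopen N1) (Uopen N2).
Proof.
move=> SP1 SP2; split=> [N12 P [PL N1P]|U12 z N1z].
  by split=> // N2P; apply: N1P => z /N12 /N2P.
apply: contrapT => N2z; have [P [PL _ N2P Pz]] := SP_separation proj SP2 N2z.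
have [N1P|N1NP] := pselect (incl N1 P); first exact/Pz/N1P.
by case: (U12 P (conj PL N1NP)).
Qed.

End Frame.

Theorem proposition4p27 (R : pzRingType) (M : lmodType R) :
  proj_in_sigma M ->
  is_frame (@SP R M) (@incl M) /\
  (forall N : M -> Prop, SP N -> @opens R M (Uopen N)) /\
  (forall O, @opens R M O -> exists N : M -> Prop, SP N /\ Uopen N = O) /\
  (forall N1 N2 : M -> Prop, SP N1 -> SP N2 ->
     (incl N1 N2 <-> incl (Uopen N1) (Uopen N2))).
Proof.
move=> proj; split; first exact: SP_frame.
split; first by move=> N SPN; exists N; split=> //; exact: SP_fully_invariant.
split; last by move=> N1 N2; exact: SP_incl_Uopen.
by move=> _ [N0 [N0fi ->]]; exact: Uopen_SP.
Qed.
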